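(* Let $\mathcal G=(\mathcal V,\mathcal E,W)$ be a network, $h\in\mathbb{R}^{\mathcal V}$, and consider the SNC game with binary actions on $\mathcal G$ with external field $h$. Let $\mathcal V=\mathcal R\cup\mathcal S$ with $\mathcal R\cap\mathcal S=\emptyset$ be a binary partition such that the subnetwork $\mathcal G_{\mathcal R}$ is structurally balanced, and let $\tau\in\{\pm1\}^{\mathcal R}$ be such that $$\tau_iW_{ij}\tau_j\ge 0\qquad\forall i,j\in\mathcal R.$$ If $$w_i^{\mathcal R}+\tau_ih_i\ge w_i^{\mathcal S}\qquad\forall i\in\mathcal R,$$ and $\mathcal N_{\mathcal S}^{(\tau)}\neq\emptyset$, then there exists a Nash equilibrium $x^*\in\mathcal N$ of the SNC game such that $x^*_{\mathcal R}=\tau$.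
   Context: A network is a triple $\mathcal G=(\mathcal V,\mathcal E,W)$ where $\mathcal V$ is a finite nonempty set, $\mathcal E\subseteq\mathcal V\times\mathcal V$, and $W\in\mathbb{R}^{\mathcal V\times\mathcal V}$ has zero diagonal and satisfies $W_{ij}\neq0$ iff $(i,j)\in\mathcal E$ (weights may have either sign; $W$ need not be symmetric). For $\mathcal U\subseteq\mathcal V$, the subnetwork $\mathcal G_{\mathcal U}$ has node set $\mathcal U$, links $\mathcal E\cap(\mathcal U\times\mathcal U)$ and weight matrix $W_{\mathcal U\mathcal U}$ (restriction of $W$). A network is structurally balanced if its node set can be written as a disjoint union $\mathcal V_1\cup\mathcal V_2$ with $W_{ij}\ge0$ whenever $i,j$ lie in the same part and $W_{ij}\le0$ whenever $i,j$ lie in different parts. For $i\in\mathcal V$ and $\mathcal B\subseteq\mathcal V$, $w_i^{\mathcal B}=\sum_{j\in\mathcal B}|W_{ij}|$. The SNC (signed network coordination) game with binary actions on $\mathcal G$ with external field $h\in\mathbb{R}^{\mathcal V}$ has player set $\mathcal V$, each player having action set $\{-1,+1\}$, strategy profile set $\mathcal X=\{\pm1\}^{\mathcal V}$, and utility $u_i(x)=h_ix_i+x_i\sum_{j\in\mathcal V}W_{ij}x_j$ for $i\in\mathcal V$. The best response of player $i$ is $\mathcal B_i(x_{-i})=\arg\max_{x_i\in\{\pm1\}}u_i(x_i,x_{-i})$, where $x_{-i}$ is the profile of the other players; a (pure) Nash equilibrium is $x^*$ with $x^*_i\in\mathcal B_i(x^*_{-i})$ for all $i$; $\mathcal N$ denotes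 the set of Nash equilibria. For a binary partition $\mathcal V=\mathcal R\cup\mathcal S$ and $y\in\{\pm1\}^{\mathcal R}$, the $\mathcal S$-restricted game with strategy profile of players in $\mathcal R$ frozen to $y$ is the game with player set $\mathcal S$, actions $\{\pm1\}$, and utilities $u_i^{(y)}(z)=u_i(y,z)=z_i\sum_{j\in\mathcal S}W_{ij}z_j+z_i\sum_{j\in\mathcal R}W_{ij}y_j+z_ih_i$ for $i\in\mathcal S$, $z\in\{\pm1\}^{\mathcal S}$; $\mathcal N_{\mathcal S}^{(y)}$ denotes its set of Nash equilibria. *)

From mathcomp Require Import all_boot all_order all_algebra.
Set Implicit Arguments. Unset Strict Implicit. Unset Printing Implicit Defensive.
Import Order.TTheory GRing.Theory Num.Theory.
Local Open Scope ring_scope.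

(* Actions in {-1,+1} are encoded by bool: true |-> +1, false |-> -1. *)
Definition act {R : pzRingType} (b : bool) : R := if b then 1 else -1.

Section SNC.
Variables (R : realFieldType) (V : finType).

(* Network weight matrix: zero diagonal (links E = {(i,j) | W i j != 0}). *)
Definition zero_diag (W : V -> V -> R) := forall i, W i i = 0.

Definition utility (W : V -> V -> R) (h : V -> R) (x : V -> bool) (i : V) : R :=
  h i * act (x i) + act (x i) * \sum_(j : V) W i j * act (x j).

Definition deviate (x : V -> bool) (i : V) (a : bool) : V -> bool :=
  fun j => if j == i then a else x j.

Definition best_resp (W : V -> V -> R) (h : V -> R) (x : V -> bool) (i : V) :=
  forall a : bool, utility W h (deviate x i a) i <= utility W h x i.

Definition is_Nash W h (x : V -> bool) := forall i, best_resp W h x i.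

Definition struct_balanced_on (W : V -> V -> R) (U : {set V}) :=
  exists V1 : {set V}, V1 \subset U /\
    forall i j, i \in U -> j \in U ->
      (((i \in V1) == (j \in V1)) -> 0 <= W i j) /\
      (((i \in V1) != (j \in V1)) -> W i j <= 0).

Definition wdeg (W : V -> V -> R) (i : V) (B : {set V}) : R :=
  \sum_(j in B) `|W i j|.

Definition glue (Rs : {set V}) (y z : V -> bool) : V -> bool :=
  fun j => if j \in Rs then y j else z j.

(* z (only its values on S = ~: Rs matter) is a Nash equilibrium of the
   S-restricted game with players of Rs frozen to y:
   every i in S best-responds (among deviations of its own action) in u_i(y,z). *)
Definition restricted_Nash W h (Rs : {set V}) (y z : V -> bool) :=
  forall i, i \in ~: Rs -> best_resp W h (glue Rs y z) i.

End SNC.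

From mathcomp Require Import all_boot all_order all_algebra.
From mathcomp Require Import lra.
Set Implicit Arguments. Unset Strict Implicit. Unset Printing Implicit Defensive.
Import Order.TTheory GRing.Theory Num.Theory.
Local Open Scope ring_scope.

(* With the frozen players playing tau, the field felt by a player i of R is
   sum_{j in R} |W_ij| + tau_i h_i plus a part coming from S, which is at least
   - sum_{j in S} |W_ij| whatever S plays; the degree condition makes it agree
   in sign with tau_i, so tau_i is a best response. The players of S are in
   equilibrium by assumption, hence gluing tau to any restricted equilibrium
   gives a Nash equilibrium. *)

Lemma normr_act (R : realFieldType) (b : bool) : `|act b : R| = 1.
Proof. by case: b; rewrite /act ?normrN normr1. Qed.

Lemma act_mul_le (R : realFieldType) (a b : bool) (r : R) :
  0 <= act b * r -> act a * r <= act b * r.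
Proof. by case: a; case: b; rewrite /act => /=; lra. Qed.

Section LocalField.
Variables (R : realFieldType) (V : finType) (W : V -> V -> R) (h : V -> R).

Definition local_field (x : V -> bool) (i : V) : R :=
  h i + \sum_j W i j * act (x j).

Lemma wdeg_ge_signed_sum (B : {set V}) (x : V -> bool) (i : V) (b : bool) :
  - wdeg W i B <= act b * \sum_(j in B) W i j * act (x j).
Proof.
rewrite /wdeg -sumrN mulr_sumr; apply: ler_sum => j _.
have -> : `|W i j| = `|act b * (W i j * act (x j))|.
  by rewrite !normrM !normr_act mul1r mulr1.
by rewrite lerNl -normrN ler_norm.
Qed.

Lemma wdeg_eq_aligned_sum (B : {set V}) (x : V -> bool) (i : V) (b : bool) :
    (forall j, j \in B -> 0 <= act b * W i j * act (x j)) ->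
  act b * \sum_(j in B) W i j * act (x j) = wdeg W i B.
Proof.
move=> aligned; rewrite /wdeg mulr_sumr; apply: eq_bigr => j jB.
by rewrite mulrA -[LHS]ger0_norm ?aligned // !normrM !normr_act mul1r mulr1.
Qed.

Lemma signed_local_field_ge (B : {set V}) (x : V -> bool) (i : V) (b : bool) :
    (forall j, j \in B -> 0 <= act b * W i j * act (x j)) ->
  wdeg W i B + act b * h i - wdeg W i (~: B) <= act b * local_field x i.
Proof.
move=> aligned; rewrite /local_field (bigID (mem B)) /=.
rewrite [X in _ + (_ + X)](eq_bigl (mem (~: B))) => [|j]; last by rewrite !inE.
rewrite mulrDr mulrDr wdeg_eq_aligned_sum //.
have := wdeg_ge_signed_sum (~: B) x i b; lra.
Qed.

Lemma utility_local_field (x : V -> bool) (i : V) :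
  utility W h x i = act (x i) * local_field x i.
Proof. by rewrite /utility mulrDr mulrC. Qed.

Hypothesis zdW : zero_diag W.

Lemma utility_deviate (x : V -> bool) (i : V) (a : bool) :
  utility W h (deviate x i a) i = act a * local_field x i.
Proof.
have field_deviate : \sum_j W i j * act (deviate x i a j) = \sum_j W i j * act (x j).
  apply: eq_bigr => j _; rewrite /deviate; case: eqP => [->|//].
  by rewrite zdW !mul0r.
by rewrite /utility field_deviate /deviate eqxx mulrDr mulrC.
Qed.

Lemma best_resp_aligned (x : V -> bool) (i : V) :
  0 <= act (x i) * local_field x i -> best_resp W h x i.
Proof.
by move=> aligned a; rewrite utility_deviate utility_local_field act_mul_le.
Qed.

End LocalField.

Theorem theorem1 (R : realFieldType) (V : finType) (W : V -> V -> R) (h : V -> R)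
    (Rs : {set V}) (tau : V -> bool) :
  (0 < #|V|)%N ->
  zero_diag W ->
  struct_balanced_on W Rs ->
  (forall i j, i \in Rs -> j \in Rs -> 0 <= act (tau i) * W i j * act (tau j)) ->
  (forall i, i \in Rs -> wdeg W i Rs + act (tau i) * h i >= wdeg W i (~: Rs)) ->
  (exists z : V -> bool, restricted_Nash W h Rs tau z) ->
  exists x : V -> bool, is_Nash W h x /\ (forall i, i \in Rs -> x i = tau i).
Proof.
move=> _ zdW _ tau_aligned degree [z z_Nash].
set x := glue Rs tau z.
have x_tau j : j \in Rs -> x j = tau j by rewrite /x /glue => ->.
exists x; split=> // i; case: (boolP (i \in Rs)) => iR; last first.
  by apply: z_Nash; rewrite in_setC.
have aligned j : j \in Rs -> 0 <= act (tau i) * W i j * act (x j).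
  by move=> jR; rewrite x_tau ?tau_aligned.
apply: best_resp_aligned => //; rewrite x_tau //.
apply: le_trans _ (signed_local_field_ge h aligned).
by rewrite subr_ge0 degree.
Qed.
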